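(* Let $a,d\in\mathbb C$ with $a\notin\mathbb Z$ and $d\notin\{0,-1,-2,\dots\}$. Then, as an identity of formal power series in $x,y$, $${}_1F_1(a;d;x)\,{}_0F_1(1-a;y)=\mathrm H_5(a;d;x,-y)+\sum_{k=1}^\infty\sum_{l=1}^k\frac{(-1)^{k-l}(k-1)!}{(l-1)!\,l!\,(k-l)!}\,\frac{1}{(1-a)_k(1-a)_{k-l}(d)_l}\,x^ly^k\,\mathrm H_5(a-k+l;d+l;x,-y).$$
   Context: Pochhammer symbol: $(\lambda)_k=\Gamma(\lambda+k)/\Gamma(\lambda)$ for every integer $k$ (possibly negative) whenever defined; $(\lambda)_0=1$. ${}_1F_1(a;c;x)=\sum_{k\ge0}\frac{(a)_k}{(c)_k k!}x^k$, ${}_0F_1(c;x)=\sum_{k\ge0}\frac{x^k}{(c)_k k!}$. Confluent Horn function $\mathrm H_5(a;d;x,y)=\sum_{p,q\ge0}\frac{(a)_{p-q}}{(d)_p\,p!\,q!}x^py^q$. All functions are regarded as formal power series in $x,y$; the infinite double sum converges in the formal (degree) topology. *)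

From HB Require Import structures.
From mathcomp Require Import all_boot all_order all_algebra.
Set Implicit Arguments. Unset Strict Implicit. Unset Printing Implicit Defensive.
Import Order.TTheory GRing.Theory Num.Theory.
Local Open Scope ring_scope.

(* Pochhammer symbol (x)_k = Gamma(x+k)/Gamma(x) for k : int.
   k = n >= 0 : x (x+1) ... (x+n-1);
   k = -(n+1) : 1 / ((x-1)(x-2)...(x-(n+1))). *)
Definition poch {R : fieldType} (x : R) (k : int) : R :=
  match k with
  | Posz n => \prod_(i < n) (x + i%:R)
  | Negz n => (\prod_(i < n.+1) (x - (i.+1)%:R))^-1
  end.

(* Formal power series in two variables x, y: f i j is the coefficient of x^i y^j. *)
Definition fps2 (R : Type) := nat -> nat -> R.

Definition fps2_add {R : fieldType} (f g : fps2 R) : fps2 R :=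
  fun i j => f i j + g i j.

Definition fps2_mul {R : fieldType} (f g : fps2 R) : fps2 R :=
  fun i j => \sum_(i1 < i.+1) \sum_(j1 < j.+1) f i1 j1 * g (i - i1)%N (j - j1)%N.

Definition fps2_scale {R : fieldType} (c : R) (f : fps2 R) : fps2 R :=
  fun i j => c * f i j.

Definition fps2_shift {R : fieldType} (l k : nat) (f : fps2 R) : fps2 R :=
  fun i j => if (l <= i)%N && (k <= j)%N then f (i - l)%N (j - k)%N else 0.

Definition fps2_negy {R : fieldType} (f : fps2 R) : fps2 R :=
  fun i j => (-1) ^+ j * f i j.

(* The formal sum  \sum_{k >= 1} \sum_{l = 1}^{k} x^l y^k G k l  in the degree
   topology: the coefficient of x^i y^j only receives contributions from
   k + l <= i + j, so truncating at k <= i + j computes it exactly. *)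
Definition fps2_sum_xy {R : fieldType} (G : nat -> nat -> fps2 R) : fps2 R :=
  fun i j => \sum_(1 <= k < (i + j).+1) \sum_(1 <= l < k.+1)
               fps2_shift l k (G k l) i j.

Definition F11 {R : fieldType} (a c : R) : fps2 R :=
  fun i j => if j == 0%N then poch a i / (poch c i * (i`!)%:R) else 0.

Definition F01 {R : fieldType} (c : R) : fps2 R :=
  fun i j => if i == 0%N then (poch c j * (j`!)%:R)^-1 else 0.

Definition H5 {R : fieldType} (a d : R) : fps2 R :=
  fun p q => poch a (p%:Z - q%:Z) / (poch d p * (p`!)%:R * (q`!)%:R).

From HB Require Import structures.
From mathcomp Require Import all_boot all_order all_algebra.
From mathcomp Require Import ring zify.
From Stdlib Require Import FunctionalExtensionality.
Set Implicit Arguments. Unset Strict Implicit. Unset Printing Implicit Defensive.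
Import Order.TTheory GRing.Theory Num.Theory.
Local Open Scope ring_scope.

(* On the right, the (k, l) summand
   contributes (a)_(i-j) / ((d)_i i!) * (-1)^(j-k) / ((1-a)_k (j-k)!) times
   C(k-1, l-1) C(i, l), and summing over l by Vandermonde leaves C(i+k-1, k);
   the H5 term is the missing k = 0 term.  Dividing by (a)_(i-j), the identity
   becomes the expansion of (a+i-j)_j = (i + (a-j))_j by the Chu-Vandermonde
   formula, once (i)_k = C(i+k-1, k) k! and (a-j)_(j-k) = (-1)^(j-k) (1-a+k)_(j-k)
   are substituted.  The hypothesis a \notin Z is what makes the Pochhammer
   symbol of integer (possibly negative) index satisfy (x)_(m+t) = (x)_m (x+m)_t;
   the hypothesis on d keeps (d)_i invertible. *)

Arguments poch {R} x k : simpl never.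

Section Pochhammer.
Variable R : fieldType.
Implicit Types x y : R.

Lemma poch0 x : poch x 0 = 1.
Proof. by rewrite /poch /= big_ord0. Qed.

Lemma pochS x (n : nat) : poch x n.+1 = poch x n * (x + n%:R).
Proof. by rewrite /poch /= big_ord_recr. Qed.

Lemma poch_addn x (m n : nat) : poch x (m + n)%N = poch x m * poch (x + m%:R) n.
Proof.
elim: n => [|n IHn]; first by rewrite addn0 poch0 mulr1.
by rewrite addnS !pochS IHn natrD addrA mulrA.
Qed.

Lemma poch_subn x (n : nat) : poch (x - n%:R) n = (-1) ^+ n * poch (1 - x) n.
Proof.
rewrite /poch /= (reindex_inj rev_ord_inj) /= -[X in (-1) ^+ X](card_ord n) -prodrN.
apply: eq_bigr => i _; rewrite subnS.
have hn : n = (((n - i).-1 + i).+1)%N by case: i => /= i; lia.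
rewrite [in n%:R]hn -addn1 !natrD; ring.
Qed.

Lemma poch_natr (i k : nat) : poch (i%:R : R) k = ('C(i + k - 1, k) * k`!)%:R.
Proof.
rewrite bin_ffact ffact_prod natr_prod /poch /= (reindex_inj rev_ord_inj) /=.
apply: eq_bigr => q _; rewrite -natrD; congr (_%:R); case: q => /= q; lia.
Qed.

Lemma poch_Vandermonde x y (n : nat) :
  \sum_(k < n.+1) 'C(n, k)%:R * poch x k * poch y (n - k)%N = poch (x + y) n.
Proof.
elim: n => [|n IHn]; first by rewrite big_ord_recl big_ord0 !poch0 /= !mulr1 addr0.
have split_binS : \sum_(k < n.+2) 'C(n.+1, k)%:R * poch x k * poch y (n.+1 - k)%N =
    \sum_(k < n.+2) 'C(n, k)%:R * poch x k * poch y (n.+1 - k)%N +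
    \sum_(k < n.+1) 'C(n, k)%:R * poch x k.+1 * poch y (n - k)%N.
  rewrite big_ord_recl [X in _ = X + _]big_ord_recl !bin0 -addrA; congr (_ + _).
  by rewrite -big_split; apply: eq_bigr => i _; rewrite binS natrD !mulrDl.
have drop_last : \sum_(k < n.+2) 'C(n, k)%:R * poch x k * poch y (n.+1 - k)%N =
    \sum_(k < n.+1) 'C(n, k)%:R * poch x k * poch y (n - k)%N * (y + (n - k)%N%:R).
  rewrite big_ord_recr /= bin_small // !mul0r addr0.
  apply: eq_bigr => i _; rewrite subSn; last by case: i => /= i; lia.
  by rewrite pochS mulrA.
rewrite split_binS drop_last pochS -IHn mulr_suml -big_split /=.
apply: eq_bigr => i _; rewrite pochS natrB; last by case: i => /= i; lia.
ring.
Qed.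

Lemma poch_neq0 x (n : nat) : (forall q : nat, x + q%:R != 0) -> poch x n != 0.
Proof. by move=> hx; rewrite /poch prodf_seq_neq0; apply/allP => q _ /=; exact: hx. Qed.

Lemma natr_fact_bin (n m : nat) : (m <= n)%N ->
  (n`!)%:R = 'C(n, m)%:R * (m`!)%:R * ((n - m)`!)%:R :> R.
Proof. by move=> hmn; rewrite -!natrM -mulnA bin_fact. Qed.

End Pochhammer.

Section PochhammerIntegerIndex.
Variable R : fieldType.
Implicit Types x : R.

Definition nonint x := forall z : int, x != z%:~R.

Lemma nonintD x (m : int) : nonint x -> nonint (x + m%:~R).
Proof.
move=> hx z; apply/negP => /eqP h; have := hx (z - m).
by rewrite rmorphB /= -h addrK eqxx.
Qed.

Lemma nonintN x : nonint x -> nonint (- x).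
Proof. by move=> hx z; rewrite eqr_oppLR -mulrNz hx. Qed.

Lemma nonint_poch_neq0 x (n : nat) : nonint x -> poch x n != 0.
Proof.
move=> hx; apply: poch_neq0 => q; rewrite addr_eq0.
by have := hx (- q%:Z); rewrite mulrNz pmulrn.
Qed.

(* Here x \notin Z enters: (x)_(-1) (x - 1) = 1 requires x != 1. *)
Lemma poch_intS x (m : int) : nonint x -> poch x (m + 1) = poch x m * (x + m%:~R).
Proof.
move=> hx; case: m => [n|[|n]].
- by rewrite -PoszD addn1 pochS pmulrn.
- have -> : Negz 0 + 1 = 0 by [].
  rewrite /poch big_ord_recr big_ord0 /= mul1r NegzE mulrNz pmulrn big_ord0 mulVf //.
  by have := hx 1; rewrite subr_eq0.
- have -> : Negz n.+1 + 1 = Negz n by rewrite !NegzE; lia.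
  rewrite /poch [X in _ = X^-1 * _]big_ord_recr /= invfM NegzE mulrNz pmulrn.
  rewrite -mulrA mulVf ?mulr1 //.
  by have := hx n.+2%:Z; rewrite subr_eq0.
Qed.

Lemma poch_addzn x (m : int) (n : nat) : nonint x ->
  poch x (m + n%:Z) = poch x m * poch (x + m%:~R) n.
Proof.
move=> hx; elim: n => [|n IHn]; first by rewrite addr0 poch0 mulr1.
have -> : m + n.+1%:Z = (m + n%:Z) + 1 by lia.
by rewrite poch_intS // IHn pochS rmorphD /= addrA mulrA.
Qed.

Lemma poch_addz x (m t : int) : nonint x ->
  poch x (m + t) = poch x m * poch (x + m%:~R) t.
Proof.
move=> hx; case: t => [n|n]; first exact: poch_addzn.
have -> : m = (m + Negz n) + n.+1%:Z by rewrite NegzE; lia.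
move: (m + Negz n) => u; rewrite -addrA.
have -> : n.+1%:Z + Negz n = 0 by rewrite NegzE; lia.
have poch_downward : poch (x + u%:~R) n.+1 =
    \prod_(i < n.+1) (x + (u + n.+1%:Z)%:~R - (i.+1)%:R).
  rewrite /poch (reindex_inj rev_ord_inj) /=; apply: eq_bigr => i _.
  rewrite rmorphD /= -!pmulrn natrB; last by case: i => /= i; lia.
  ring.
rewrite addr0 poch_addzn // poch_downward /poch -mulrA mulfV ?mulr1 //.
rewrite prodf_seq_neq0; apply/allP => i _ /=; rewrite subr_eq0.
by have := nonintD (u + n.+1%:Z) hx (i.+1); rewrite pmulrn.
Qed.

Lemma poch_subn_addz x (s : nat) (m : int) : nonint x ->
  poch (x - s%:R) (s%:Z + m) = (-1) ^+ s * poch (1 - x) s * poch x m.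
Proof.
move=> hx; have hxs : nonint (x - s%:R) by have := nonintD (- s%:Z) hx; rewrite mulrNz.
by rewrite poch_addz // poch_subn -pmulrn subrK.
Qed.

End PochhammerIntegerIndex.

Lemma Vandermonde_pred (i k : nat) : (0 < k)%N ->
  (\sum_(1 <= l < k.+1) 'C(k.-1, l.-1) * 'C(i, l))%N = 'C(i + k.-1, k).
Proof.
move=> hk; rewrite -binomial.Vandermonde.
rewrite -(big_mkord xpredT (fun l => 'C(i, l) * 'C(k.-1, k - l))%N).
rewrite [in RHS]big_ltn // (@bin_small k.-1 (k - 0)); last lia.
rewrite muln0 add0n; apply: eq_big_nat => l /andP [hl1 hlk].
by rewrite mulnC -(@bin_sub k.-1 l.-1); [congr (_ * _); congr 'C(_, _)|]; lia.
Qed.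

Lemma fps2_mul_sep (R : fieldType) (f g : fps2 R) i j :
  (forall p q, q != 0%N -> f p q = 0) -> (forall p q, p != 0%N -> g p q = 0) ->
  fps2_mul f g i j = f i 0%N * g 0%N j.
Proof.
move=> hf hg; rewrite /fps2_mul big_ord_recr /= big1; last first.
  move=> p _; apply: big1 => q _; rewrite hg ?mulr0 //; case: p => /= p; lia.
rewrite add0r big_ord_recl /= big1 ?addr0 ?subnn ?subn0 //.
by move=> q _; rewrite hf ?mul0r.
Qed.

Section Coefficients.
Variable R : numFieldType.
Variables a d : R.
Hypothesis ha : nonint a.
Hypothesis hd : forall n : nat, d != - n%:R.

Lemma fact_neq0 n : (n`!)%:R != 0 :> R.
Proof. by rewrite pnatr_eq0 -lt0n fact_gt0. Qed.

Lemma poch_1subr_neq0 (n : nat) : poch (1 - a) n != 0.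
Proof.
apply: nonint_poch_neq0; rewrite addrC.
by have := nonintD 1 (nonintN ha).
Qed.

Lemma poch_d_neq0 (n : nat) : poch d n != 0.
Proof.
apply: poch_neq0 => q; apply: contra (hd q) => /eqP h.
by rewrite -[d](addrK q%:R) h sub0r.
Qed.

Definition summand k l : fps2 R :=
  fps2_scale
    ((-1) ^+ (k - l) * ((k.-1)`!)%:R / ((l.-1)`!)%:R / (l`!)%:R / ((k - l)`!)%:R
     / (poch (1 - a) k * poch (1 - a) (k - l)%N * poch d l))
    (fps2_negy (H5 (a - k%:R + l%:R) (d + l%:R))).

Definition coef_scale i j := poch a (i%:Z - j%:Z) / (poch d i * (i`!)%:R).

Definition coef_weight j k := (-1) ^+ (j - k) / (poch (1 - a) k * ((j - k)`!)%:R).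

Lemma summand_coef (i j k l : nat) : (0 < l)%N -> (l <= k)%N ->
  fps2_shift l k (summand k l) i j =
  if (k <= j)%N then coef_scale i j * coef_weight j k * ('C(k.-1, l.-1) * 'C(i, l))%:R
  else 0.
Proof.
move=> hl1 hlk; rewrite /fps2_shift.
have [hli|hli] := leqP l i; last by rewrite (@bin_small i l) // muln0 mulr0; case: ifP.
have [hkj|//] := leqP k j.
rewrite /= /summand /fps2_scale /fps2_negy /H5.
have -> : a - k%:R + l%:R = a - (k - l)%N%:R by rewrite natrB //; ring.
have -> : (i - l)%N%:Z - (j - k)%N%:Z = (k - l)%N%:Z + (i%:Z - j%:Z) by lia.
rewrite poch_subn_addz //.
have poch_d_split : poch d i = poch d l * poch (d + l%:R) (i - l)%N.
  by rewrite -poch_addn subnKC.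
have hdl : poch (d + l%:R) (i - l)%N != 0.
  by apply: contra (poch_d_neq0 i) => /eqP h; rewrite poch_d_split h mulr0.
have hCil : 'C(i, l)%:R != 0 :> R by rewrite pnatr_eq0 -lt0n bin_gt0.
rewrite /coef_scale /coef_weight poch_d_split natrM.
rewrite (@natr_fact_bin _ i l) // (@natr_fact_bin _ k.-1 l.-1); last lia.
have -> : (k.-1 - l.-1 = k - l)%N by lia.
rewrite -[(-1) ^+ (k - l)]signr_odd; case: (odd _) => /=; field;
  by rewrite !fact_neq0 !poch_1subr_neq0 !poch_d_neq0 hCil hdl.
Qed.

Lemma sum_xy_summand_coef (i j : nat) : fps2_sum_xy summand i j =
  coef_scale i j * \sum_(1 <= k < j.+1) coef_weight j k * 'C(i + k.-1, k)%:R.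
Proof.
rewrite /fps2_sum_xy (@big_cat_nat _ _ _ j.+1) //=; last lia.
rewrite [X in _ + X]big1_seq ?addr0; last first.
  move=> k /andP [_]; rewrite mem_index_iota => hk.
  apply: big1_seq => l /andP [_]; rewrite mem_index_iota => hl.
  by rewrite summand_coef ?ifN //; lia.
rewrite mulr_sumr; apply: eq_big_nat => k /andP [hk1 /ltnSE hkj].
under eq_big_nat => l /andP [hl1 /ltnSE hlk] do rewrite summand_coef // hkj.
by rewrite -mulr_sumr -natr_sum Vandermonde_pred // -mulrA.
Qed.

Lemma poch_ratio_expansion (i j : nat) : poch a i / (poch (1 - a) j * (j`!)%:R) =
  poch a (i%:Z - j%:Z) * \sum_(0 <= k < j.+1) coef_weight j k * 'C(i + k.-1, k)%:R.
Proof.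
have -> : poch a i = poch a ((i%:Z - j%:Z) + j%:Z) by rewrite subrK.
rewrite poch_addz // -mulrA; congr (_ * _).
have -> : a + (i%:Z - j%:Z)%:~R = i%:R + (a - j%:R) by rewrite rmorphB /= -!pmulrn; ring.
rewrite -poch_Vandermonde mulr_suml big_mkord; apply: eq_bigr => [[k hk]] _ /=.
have hkj : (k <= j)%N by lia.
have -> : a - j%:R = (a - k%:R) - (j - k)%N%:R by rewrite natrB //; ring.
have poch_1subr_split : poch (1 - a) j = poch (1 - a) k * poch (1 - (a - k%:R)) (j - k)%N.
  have -> : 1 - (a - k%:R) = 1 - a + k%:R by ring.
  by rewrite -poch_addn subnKC.
rewrite poch_natr poch_subn.
have -> : 'C(i + k - 1, k) = 'C(i + k.-1, k).
  by case: k {hk hkj poch_1subr_split} => [|k]; rewrite ?bin0 //; congr 'C(_, _); lia.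
have hak : poch (1 - (a - k%:R)) (j - k)%N != 0.
  by apply: contra (poch_1subr_neq0 j) => /eqP h; rewrite poch_1subr_split h mulr0.
have hCjk : 'C(j, k)%:R != 0 :> R by rewrite pnatr_eq0 -lt0n bin_gt0.
rewrite /coef_weight poch_1subr_split (@natr_fact_bin _ j k hkj) !natrM.
by field; rewrite !fact_neq0 poch_1subr_neq0 hak hCjk.
Qed.

End Coefficients.

Theorem mainTheorem11 (R : numClosedFieldType) (a d : R)
  (ha : forall z : int, a != z%:~R)
  (hd : forall n : nat, d != - n%:R) :
  fps2_mul (F11 a d) (F01 (1 - a)) =
  fps2_add (fps2_negy (H5 a d))
    (fps2_sum_xy (fun k l =>
       fps2_scale
         ((-1) ^+ (k - l) * ((k.-1)`!)%:R / ((l.-1)`!)%:R / (l`!)%:R / ((k - l)`!)%:R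
          / (poch (1 - a) k * poch (1 - a) (k - l)%N * poch d l))
         (fps2_negy (H5 (a - k%:R + l%:R) (d + l%:R))))).
Proof.
apply: functional_extensionality => i; apply: functional_extensionality => j.
rewrite fps2_mul_sep => [|p q /negbTE h|p q /negbTE h]; last 2 first.
- by rewrite /F11 h.
- by rewrite /F01 h.
rewrite /fps2_add -[fps2_sum_xy _ i j]/(fps2_sum_xy (summand a d) i j) sum_xy_summand_coef //.
rewrite /coef_scale /F11 /F01 /fps2_negy /H5 /= mulrAC.
rewrite poch_ratio_expansion // (@big_ltn _ _ _ 0) // /coef_weight subn0 poch0 bin0.
set S := \sum_(1 <= k < j.+1) _.
by field; rewrite !fact_neq0 poch_d_neq0.
Qed.
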